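(* Let $X_M^{(0)}, X_S^{(0)}$ be scalar random variables such that $[X_M^{(0)},X_S^{(0)}]$ is bivariate normal with mean zero, unit variances and covariance $\rho$. Let $X_S^{(t)}$ and $X_S^{(t+1)}$ be generated from $X_S^{(0)}$ by a forward noising process (independent of $X_M^{(0)}$ given $X_S^{(0)}$, and with $X_S^{(t+1)}$ independent of $(X_S^{(0)},X_M^{(0)})$ given $X_S^{(t)}$) with $q(X_S^{(t)}\mid X_S^{(0)})=\mathcal{N}(\sqrt{\bar\alpha_t}\,X_S^{(0)},1-\bar\alpha_t)$ and $q(X_S^{(t+1)}\mid X_S^{(t)})=\mathcal{N}(\sqrt{1-\beta_{t+1}}\,X_S^{(t)},\beta_{t+1})$, where $\beta_{t+1},\bar\alpha_t\in(0,1)$. Then $$\mathbb{E}\,\mathrm{KL}\Big(q(X_S^{(t)}\mid X_S^{(t+1)},X_M^{(0)})\,\Big\|\,q(X_S^{(t)}\mid X_S^{(t+1)})\Big)\ \ge\ -\tfrac12\Big(\log(1-\beta_{t+1}\bar\alpha_t\rho^2)+\beta_{t+1}\bar\alpha_t\rho^2\Big),$$ where the expectation is over the joint law of $(X_M^{(0)},X_S^{(t+1)})$.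
   Context: $\mathrm{KL}(f\|g)=\int f\log(f/g)$ with natural logarithm; $q(\cdot\mid\cdot)$ denotes conditional densities under the joint law of the described random variables. *)

From HB Require Import structures.
From mathcomp Require Import all_boot all_order all_algebra.
From mathcomp Require Import all_classical all_reals all_analysis.
Set Implicit Arguments. Unset Strict Implicit. Unset Printing Implicit Defensive.
Import Order.TTheory GRing.Theory Num.Theory.
Import numFieldNormedType.Exports.
Local Open Scope classical_set_scope.
Local Open Scope ring_scope.

Section Defs.
Variable R : realType.

Definition gauss_pdf (mu s2 x : R) : R :=
  expR (- (x - mu) ^+ 2 / (2 * s2)) / Num.sqrt (2 * pi * s2).

(* density of the centered bivariate normal with unit variances and
   covariance rho (requires rho^2 < 1) *)
Definition binorm_pdf (rho m s : R) : R :=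
  expR (- (m ^+ 2 - 2 * rho * m * s + s ^+ 2) / (2 * (1 - rho ^+ 2)))
  / (2 * pi * Num.sqrt (1 - rho ^+ 2)).

(* joint density of (X_M^(0), X_S^(0), X_S^(t), X_S^(t+1)) :
   q(m,s0) q(a|s0) q(b|a), encoding the conditional independence structure *)
Definition joint_pdf (rho abar beta m s0 a b : R) : R :=
  binorm_pdf rho m s0
  * gauss_pdf (Num.sqrt abar * s0) (1 - abar) a
  * gauss_pdf (Num.sqrt (1 - beta) * a) beta b.

Definition Rint (f : R -> R) : R :=
  fine (\int[@lebesgue_measure R]_x (f x)%:E)%E.

Definition q_amb rho abar beta (a m b : R) : R :=
  Rint (fun s0 => joint_pdf rho abar beta m s0 a b).
Definition q_mb rho abar beta (m b : R) : R :=
  Rint (fun a => q_amb rho abar beta a m b).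
Definition q_ab rho abar beta (a b : R) : R :=
  Rint (fun m => q_amb rho abar beta a m b).
Definition q_b rho abar beta (b : R) : R :=
  Rint (fun a => q_ab rho abar beta a b).

Definition cond_a_bm rho abar beta (m b : R) (a : R) : R :=
  q_amb rho abar beta a m b / q_mb rho abar beta m b.
Definition cond_a_b rho abar beta (b : R) (a : R) : R :=
  q_ab rho abar beta a b / q_b rho abar beta b.

Definition KL (f g : R -> R) : \bar R :=
  (\int[@lebesgue_measure R]_x (f x * ln (f x / g x))%:E)%E.

Definition expected_KL rho abar beta : \bar R :=
  (\int[@lebesgue_measure R]_m \int[@lebesgue_measure R]_b
     ((q_mb rho abar beta m b)%:E
      * KL (cond_a_bm rho abar beta m b) (cond_a_b rho abar beta b)))%E.

End Defs.

From Pilot Require Import Defs.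
From HB Require Import structures.
From mathcomp Require Import all_boot all_order all_algebra.
From mathcomp Require Import all_classical all_reals all_analysis.
From mathcomp Require Import ring lra measurable_realfun.
Set Implicit Arguments. Unset Strict Implicit. Unset Printing Implicit Defensive.
Import Order.TTheory GRing.Theory Num.Theory.
Import numFieldNormedType.Exports.
Local Open Scope classical_set_scope.
Local Open Scope ring_scope.

(* All densities of the model are Gaussian, and a Gaussian prior times a
   linear-Gaussian likelihood factors, by completing the square, into a
   Gaussian marginal times a Gaussian posterior.  Hence
   q(X_S^(t) | X_S^(t+1), X_M^(0)) and q(X_S^(t) | X_S^(t+1)) are normal
   densities with explicit parameters, their KL divergence is a quadratic
   polynomial in (X_M^(0), X_S^(t+1)), and its expectation only involves the
   first two moments of a Gaussian.  This yields the closed form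
     E KL = 1/2 ln ((1 - abar (1 - beta) rho^2) / (1 - abar rho^2)).
   With c = abar rho^2 and x = beta c <= c one has (1 - c + x)(1 - x) >= 1 - c,
   so E KL >= -1/2 ln (1 - x) >= -1/2 (ln (1 - x) + x). *)

Lemma continuous_sqrD (R : realType) (c : R) : continuous (fun x : R => (x + c) ^+ 2).
Proof.
move=> x; apply: (@continuous_comp _ _ _ (fun y => y + c) (fun y => y ^+ 2)).
  by apply: continuousD; [exact: cvg_id|exact: cvg_cst].
exact: exprn_continuous.
Qed.

Lemma derivable_oo_LRcontinuousT (R : realType) (f : R -> R) a b :
  (forall x, derivable f x 1) -> derivable_oo_LRcontinuous f a b.
Proof.
move=> df; have cf : continuous f.
  by move=> x; apply: differentiable_continuous; exact/derivable1_diffP.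
split; first by move=> x _; exact: df.
- exact: cvg_at_right_filter (cf a).
- exact: cvg_at_left_filter (cf b).
Qed.

Lemma ln_sqrtr (R : realType) (x : R) : 0 < x -> ln (Num.sqrt x) = ln x / 2.
Proof.
move=> x0; rewrite -[in RHS](sqr_sqrtr (ltW x0)) lnXn ?sqrtr_gt0// mulr2n.
by field.
Qed.

Section lebesgue_integral_R.
Variable R : realType.
Notation mu := (@lebesgue_measure R).
Local Open Scope ereal_scope.

Lemma ge0_integralT_shift (f : R -> R) m : continuous f -> (forall x, 0 <= f x)%R ->
  \int[mu]_x (f x)%:E = \int[mu]_x (f (x - m))%:E.
Proof.
move=> cf f0.
have D1 : (fun x : R => x - m)%R^`()%classic = cst 1%R.
  by apply/funext => x; rewrite derive1E deriveB// derive_id derive_cst subr0.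
rewrite (@increasing_ge0_integration_by_substitutionT _ (fun x => x - m)%R f)//.
- by apply: eq_integral => x _; rewrite D1 /= mulr1.
- by move=> x y xy; rewrite ltrD2r.
- by rewrite D1; exact: cst_continuous.
- by rewrite D1; exact: is_cvg_cst.
- by rewrite D1; exact: is_cvg_cst.
- exact: cvg_addrr_Ny.
- exact: cvg_addrr.
Qed.

Lemma ge0_integralT_split0 (f : R -> R) : continuous f -> (forall x, 0 <= f x)%R ->
  \int[mu]_x (f x)%:E = \int[mu]_(x in `[0%R, +oo[) (f x)%:E
                        + \int[mu]_(x in `[0%R, +oo[) (f (- x))%:E.
Proof.
move=> cf f0; have mf : measurable_fun [set: R] f by exact: continuous_measurable_fun.
rewrite -(setUv `[0%R, +oo[%classic) ge0_integral_setU//=; last 4 first.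
- exact: measurableC.
- by apply/measurable_EFinP; rewrite setUv.
- by move=> x _; rewrite lee_fin.
- exact/disj_setPCl.
congr +%E; rewrite setCitvr integral_itv_bndo_bndc; last first.
  exact/measurable_EFinP/measurable_funTS.
by rewrite -{1}oppr0 ge0_integration_by_substitutionNy//; exact: continuous_subspaceT.
Qed.

Lemma ge0_integralT_oppr (f : R -> R) : continuous f -> (forall x, 0 <= f x)%R ->
  \int[mu]_x (f x)%:E = \int[mu]_x (f (- x))%:E.
Proof.
move=> cf f0; have cfN : continuous (fun x => f (- x)%R).
  by move=> x; apply: continuous_comp; [exact: oppr_continuous|exact: cf].
rewrite ge0_integralT_split0// (ge0_integralT_split0 cfN)// addeC.
by under [X in _ = _ + X]eq_integral do rewrite opprK.
Qed.

Lemma integrable_ge0_fin (f : R -> R) r : continuous f -> (forall x, 0 <= f x)%R ->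
  \int[mu]_x (f x)%:E = r%:E -> mu.-integrable setT (fun x => (f x)%:E).
Proof.
move=> cf f0 fr; apply/integrableP; split.
  by apply/measurable_EFinP; exact: continuous_measurable_fun.
under eq_integral do rewrite abse_EFin ger0_norm//.
by rewrite fr ltry.
Qed.

End lebesgue_integral_R.

Section gauss_pdf.
Variable R : realType.
Notation mu := (@lebesgue_measure R).
Implicit Types m v x c : R.

Let sqrt_2piv_gt0 v : 0 < v -> 0 < Num.sqrt (2 * pi * v).
Proof. by move=> v0; rewrite sqrtr_gt0 !mulr_gt0// pi_gt0. Qed.

Lemma gauss_pdf_gt0 m v x : 0 < v -> 0 < gauss_pdf m v x.
Proof. by move=> v0; rewrite divr_gt0 ?expR_gt0 ?sqrt_2piv_gt0. Qed.

Lemma gauss_pdf_ge0 m v x : 0 < v -> 0 <= gauss_pdf m v x.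
Proof. by move=> v0; exact/ltW/gauss_pdf_gt0. Qed.

Lemma gauss_pdf_center m v x : gauss_pdf m v x = gauss_pdf 0 v (x - m).
Proof. by rewrite /gauss_pdf subr0. Qed.

Lemma gauss_pdf0N v x : gauss_pdf 0 v (- x) = gauss_pdf 0 v x.
Proof. by rewrite /gauss_pdf !subr0 sqrrN. Qed.

Lemma gauss_pdfE m v : 0 < v -> gauss_pdf m v = normal_pdf m (Num.sqrt v).
Proof.
move=> v0; apply/funext=> x.
rewrite /normal_pdf gt_eqF ?sqrtr_gt0// /normal_peak /normal_fun /gauss_pdf.
rewrite sqr_sqrtr ?ltW// mulrC; congr (_^-1 * expR (_ / _)); [congr Num.sqrt|]; ring.
Qed.

Lemma integral_gauss_pdf m v : 0 < v -> (\int[mu]_x (gauss_pdf m v x)%:E = 1)%E.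
Proof. by move=> v0; rewrite gauss_pdfE// integral_normal_pdf. Qed.

Lemma integrable_gauss_pdf m v : 0 < v ->
  mu.-integrable setT (fun x => (gauss_pdf m v x)%:E).
Proof. by move=> v0; rewrite gauss_pdfE//; exact: integrable_normal_pdf. Qed.

Lemma continuous_gauss_pdf m v : 0 < v -> continuous (gauss_pdf m v).
Proof.
move=> v0; rewrite gauss_pdfE//.
by apply: continuous_normal_pdf; rewrite gt_eqF ?sqrtr_gt0.
Qed.

Lemma continuousM_gauss_pdf (h : R -> R) m v : 0 < v -> continuous h ->
  continuous (fun x => h x * gauss_pdf m v x).
Proof.
move=> v0 ch x; apply: (@continuousM R R h (gauss_pdf m v)); first exact: ch.
exact: continuous_gauss_pdf.
Qed.

Lemma gauss_pdf_mul c m v w s a : 0 < v -> 0 < w ->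
  gauss_pdf m v s * gauss_pdf (c * s) w a =
  gauss_pdf (c * m) (c ^+ 2 * v + w) a *
  gauss_pdf ((m * w + c * v * a) / (c ^+ 2 * v + w)) (v * w / (c ^+ 2 * v + w)) s.
Proof.
move=> v0 w0; have V0 : 0 < c ^+ 2 * v + w by rewrite ltr_wpDl// mulr_ge0 ?sqr_ge0// ltW.
rewrite /gauss_pdf !mulf_div -!expRD -!sqrtrM ?mulr_ge0 ?pi_ge0 ?ltW ?divr_gt0 ?mulr_gt0//.
congr (expR _ / Num.sqrt _); field; by rewrite ?gt_eqF.
Qed.

Lemma binorm_pdfE r m s : r ^+ 2 < 1 ->
  binorm_pdf r m s = gauss_pdf 0 1 m * gauss_pdf (r * m) (1 - r ^+ 2) s.
Proof.
rewrite -subr_gt0 => r0.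
rewrite /binorm_pdf /gauss_pdf mulf_div -expRD -sqrtrM ?mulr_ge0 ?pi_ge0//.
have -> : 2 * pi * 1 * (2 * pi * (1 - r ^+ 2)) = (2 * pi) ^+ 2 * (1 - r ^+ 2) by ring.
rewrite sqrtrM ?sqr_ge0// sqrtr_sqr ger0_norm ?mulr_ge0 ?pi_ge0//.
congr (expR _ / _); field; by rewrite gt_eqF.
Qed.

Lemma Rint_scale_gauss_pdf k m v : 0 < v -> Defs.Rint (fun s => k * gauss_pdf m v s) = k.
Proof.
move=> v0; rewrite /Defs.Rint; under eq_integral do rewrite EFinM.
by rewrite integralZl ?integrable_gauss_pdf// integral_gauss_pdf// mule1.
Qed.

Lemma Rint_gauss_pdf_mul k c m v w a : 0 < v -> 0 < w ->
  Defs.Rint (fun s => k * (gauss_pdf m v s * gauss_pdf (c * s) w a)) =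
  k * gauss_pdf (c * m) (c ^+ 2 * v + w) a.
Proof.
move=> v0 w0; have V0 : 0 < c ^+ 2 * v + w by rewrite ltr_wpDl// mulr_ge0 ?sqr_ge0// ltW.
under eq_fun do rewrite gauss_pdf_mul// mulrA.
by rewrite Rint_scale_gauss_pdf// divr_gt0// mulr_gt0.
Qed.

End gauss_pdf.

Section gauss_moments.
Variables (R : realType) (v : R).
Hypothesis v0 : 0 < v.
Notation mu := (@lebesgue_measure R).
Local Notation g := (gauss_pdf 0 v).

Let cg : continuous g := continuous_gauss_pdf (m := 0) v0.
Let g0 y : 0 <= g y := gauss_pdf_ge0 0 y v0.
Let sqr_g0 y : 0 <= y ^+ 2 * g y := mulr_ge0 (sqr_ge0 _) (g0 y).
Let csqr_g : continuous (fun y : R => y ^+ 2 * g y) :=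
  continuousM_gauss_pdf (m := 0) v0 (@exprn_continuous R 2).

Let EFin_half (x : \bar R) r : (2%:E * x)%E = r%:E -> x = (r / 2)%:E.
Proof.
case: x => [s| |] /=.
- by move=> [<-]; congr EFin; field.
- by rewrite mulry gtr0_sg ?mul1e.
- by rewrite mulrNy gtr0_sg ?mul1e.
Qed.

Lemma is_derive_gauss_pdf0 (y : R) : is_derive y (1 : R) (fun z => - v * g z) (y * g y).
Proof.
have s0 : Num.sqrt (2 * pi * v) != 0 by rewrite gt_eqF// sqrtr_gt0 !mulr_gt0// pi_gt0.
rewrite /gauss_pdf; apply: is_derive_eq; rewrite /GRing.scale /=.
by field; rewrite s0 gt_eqF.
Qed.

Lemma integral_itv0b_sqr_gauss_pdf0 b : 0 < b ->
  (\int[mu]_(y in `[0%R, b]) (y ^+ 2 * g y)%:E =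
   (- v * b * g b)%:E + v%:E * \int[mu]_(y in `[0%R, b]) (g y)%:E)%E.
Proof.
move=> b0; have ig : mu.-integrable `[0%R, b] (EFin \o g).
  apply: continuous_compact_integrable; first exact: segment_compact.
  exact: continuous_subspaceT.
have dG y : derivable (fun z => - v * g z) y 1 by have [] := is_derive_gauss_pdf0 y.
have cyg : continuous (fun y : R => y * g y).
  by move=> x; apply: (@continuousM R R id g); [exact: cvg_id|exact: cg].
transitivity (\int[mu]_(y in `[0%R, b]) (id y * (y * g y))%:E)%E.
  by apply: eq_integral => y _; rewrite expr2 mulrA.
rewrite (@integration_by_parts R id (fun z => - v * g z) (cst 1))//; last 6 first.
- by apply: continuous_subspaceT => x; exact: cvg_cst.
- by apply: derivable_oo_LRcontinuousT => x; exact: derivable_id.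
- by move=> x _; rewrite derive1E derive_id.
- exact: continuous_subspaceT.
- exact: derivable_oo_LRcontinuousT.
- by move=> x _; have [_ <-] := is_derive_gauss_pdf0 x; rewrite derive1E.
under eq_integral do rewrite mul1r EFinM.
rewrite integralZl// -(fineK (integrable_fin_num _ ig))//.
by rewrite -!EFinM -EFinB -EFinD; congr EFin; ring.
Qed.

Lemma mul_gauss_pdf0_le y : 0 < y ->
  y * g y <= 2 * v / Num.sqrt (2 * pi * v) / y.
Proof.
move=> y0; have s0 : 0 < Num.sqrt (2 * pi * v) by rewrite sqrtr_gt0 !mulr_gt0// pi_gt0.
have e : expR (y ^+ 2 / (2 * v)) * (2 * v) >= y ^+ 2.
  rewrite -ler_pdivrMr ?mulr_gt0//; apply: le_trans (expR_ge1Dx _); lra.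
rewrite /gauss_pdf subr0 mulNr expRN.
set E := expR _ in e *; set S := Num.sqrt _ in s0 *.
have E0 : 0 < E by exact: expR_gt0.
rewrite (_ : y * (E^-1 / S) = y / E / S); last by rewrite mulrA.
rewrite (_ : 2 * v / S / y = 2 * v / y / S); last by rewrite mulrAC.
rewrite ler_pM2r ?invr_gt0// ler_pdivlMr// mulrAC ler_pdivrMr//.
by rewrite -expr2 mulrC.
Qed.

Lemma cvg_mul_gauss_pdf0 : (n.+1%:R * g n.+1%:R) @[n --> \oo] --> (0 : R).
Proof.
set K := 2 * v / Num.sqrt (2 * pi * v).
apply: (@squeeze_cvgr _ _ _ _ (cst 0) (fun n => K * harmonic n)).
- near=> n; rewrite /= mulr_ge0 ?gauss_pdf_ge0//=.
  exact: mul_gauss_pdf0_le.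
- exact: cvg_cst.
- by rewrite -(mulr0 K); apply: cvgM; [exact: cvg_cst|exact: cvg_harmonic].
Unshelve. all: end_near. Qed.

Lemma integral_itv0y_gauss_pdf0 : (\int[mu]_(y in `[0%R, +oo[) (g y)%:E = (1 / 2)%:E)%E.
Proof.
apply: EFin_half; rewrite -(integral_gauss_pdf 0 v0) set_itvcy.
by apply/esym/ge0_symfun_integralT => // y; rewrite /= gauss_pdf0N.
Qed.

Lemma integral_itv0y_sqr_gauss_pdf0 :
  (\int[mu]_(y in `[0%R, +oo[) (y ^+ 2 * g y)%:E = (v / 2)%:E)%E.
Proof.
have := ge0_cvgn_integral (mu := mu) sqr_g0 (continuous_measurable_fun csqr_g).
rewrite -cvg_shiftS => L.
suff : (\int[mu]_(x in `[0%R, n.+1%:R]) (x ^+ 2 * g x)%:E)%E @[n --> \oo] --> (v / 2)%:E.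
  exact: (cvg_unique (@ereal_hausdorff R) L).
under eq_fun => n do rewrite (integral_itv0b_sqr_gauss_pdf0 (ltr0Sn R n)).
have -> : ((v / 2)%:E = 0%:E + v%:E * (1 / 2)%:E :> \bar R)%E.
  by rewrite add0e -EFinM mul1r.
apply: cvgeD => //.
- apply: cvg_EFin; first exact: nearW.
  rewrite -[X in _ --> X](mulr0 (- v)); under eq_fun do rewrite -mulrA.
  by apply: cvgM; [exact: cvg_cst|exact: cvg_mul_gauss_pdf0].
- apply: cvgeM => //; first exact: cvg_cst.
  have := ge0_cvgn_integral (mu := mu) g0 (continuous_measurable_fun cg).
  by rewrite -cvg_shiftS integral_itv0y_gauss_pdf0.
Qed.

Lemma integral_sqr_gauss_pdf0 : (\int[mu]_y (y ^+ 2 * g y)%:E = v%:E)%E.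
Proof.
rewrite ge0_symfun_integralT//; last by move=> y; rewrite /= sqrrN gauss_pdf0N.
by rewrite -set_itvcy integral_itv0y_sqr_gauss_pdf0 -EFinM; congr EFin; field.
Qed.

Lemma integral_sqrD1_gauss_pdf0 : (\int[mu]_y ((y + 1) ^+ 2 * g y)%:E = (v + 1)%:E)%E.
Proof.
have csqrD (c : R) : continuous (fun y : R => (y + c) ^+ 2 * g y).
  exact: (continuousM_gauss_pdf (m := 0) v0 (continuous_sqrD (c := c))).
have sqrD_g0 (c y : R) : 0 <= (y + c) ^+ 2 * g y by rewrite mulr_ge0 ?sqr_ge0.
have mE (f : R -> R) : continuous f -> measurable_fun setT (EFin \o f).
  by move=> cf; apply/measurable_EFinP; exact: continuous_measurable_fun.
(* x |-> -x swaps (x + 1)^2 and (x - 1)^2, whose sum is 2 x^2 + 2. *)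
have reflect1 : (\int[mu]_y ((y + 1) ^+ 2 * g y)%:E =
                 \int[mu]_y ((y + -1) ^+ 2 * g y)%:E)%E.
  rewrite ge0_integralT_oppr//; apply: eq_integral => y _.
  by rewrite gauss_pdf0N -sqrrN opprD opprK.
rewrite -[v + 1](mulfK (_ : 2 != 0))//; apply: EFin_half.
rewrite mule_natl mule2n {2}reflect1 -ge0_integralD//; last 4 first.
- by move=> y _; rewrite lee_fin.
- exact: mE.
- by move=> y _; rewrite lee_fin.
- exact: mE.
have E y : (((y + 1) ^+ 2 * g y)%:E + ((y - 1) ^+ 2 * g y)%:E =
            2%:E * ((y ^+ 2 * g y)%:E + (g y)%:E))%E.
  by rewrite -!EFinD -EFinM; congr EFin; ring.
under eq_integral do rewrite E.
rewrite ge0_integralZl//; last 2 first.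
- exact: (emeasurable_funD (mE _ csqr_g) (mE _ cg)).
- by move=> y _; rewrite adde_ge0 ?lee_fin.
rewrite ge0_integralD//; last 4 first.
- by move=> y _; rewrite lee_fin.
- exact: mE.
- by move=> y _; rewrite lee_fin.
- exact: mE.
rewrite integral_sqr_gauss_pdf0 integral_gauss_pdf//.
by rewrite -EFinD -EFinM mulrC.
Qed.

End gauss_moments.

Section gauss_quadratic_moment.
Variable R : realType.
Notation mu := (@lebesgue_measure R).

Lemma ge0_integral_center_gauss_pdf (h : R -> R) m v : 0 < v ->
  continuous h -> (forall y, 0 <= h y) ->
  (\int[mu]_x (h (x - m) * gauss_pdf m v x)%:E =
   \int[mu]_y (h y * gauss_pdf 0 v y)%:E)%E.
Proof.
move=> v0 ch h0; rewrite [RHS](ge0_integralT_shift m); last 2 first.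
- exact: continuousM_gauss_pdf.
- by move=> y; rewrite mulr_ge0 ?gauss_pdf_ge0.
by apply: eq_integral => x _; rewrite gauss_pdf_center.
Qed.

Lemma integral_quadratic_gauss_pdf c2 c1 c0 m v : 0 < v ->
  (\int[mu]_x ((c2 * x ^+ 2 + c1 * x + c0) * gauss_pdf m v x)%:E =
   (c2 * (v + m ^+ 2) + c1 * m + c0)%:E)%E.
Proof.
move=> v0; set g := gauss_pdf m v.
have M2 : (\int[mu]_x ((x - m) ^+ 2 * g x)%:E = v%:E)%E.
  rewrite (ge0_integral_center_gauss_pdf (h := fun y => y ^+ 2))//.
  - exact: integral_sqr_gauss_pdf0.
  - exact: exprn_continuous.
  - exact: sqr_ge0.
have M1 : (\int[mu]_x ((x - m + 1) ^+ 2 * g x)%:E = (v + 1)%:E)%E.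
  rewrite (ge0_integral_center_gauss_pdf (h := fun y => (y + 1) ^+ 2))//.
  - exact: integral_sqrD1_gauss_pdf0.
  - exact: continuous_sqrD.
  - by move=> y; exact: sqr_ge0.
have cQ1 : continuous (fun x => (x - m + 1) ^+ 2 * g x).
  under eq_fun do rewrite -addrA.
  exact: continuousM_gauss_pdf v0 (continuous_sqrD (c := - m + 1)).
have cQ2 : continuous (fun x => (x - m) ^+ 2 * g x).
  exact: continuousM_gauss_pdf v0 (continuous_sqrD (c := - m)).
have Q0 c x : 0 <= c ^+ 2 * g x by rewrite mulr_ge0 ?sqr_ge0 ?gauss_pdf_ge0.
have i1 := integrable_ge0_fin cQ1 (fun x => Q0 _ x) M1.
have i2 := integrable_ge0_fin cQ2 (fun x => Q0 _ x) M2.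
have i3 := integrable_gauss_pdf m v0.
(* The nonnegative, hence integrable, functions (x - m + 1)^2 g, (x - m)^2 g
   and g span the quadratic polynomials times g. *)
set a := c1 / 2 + c2 * m; set b := c2 - a; set c := c2 * m ^+ 2 + c1 * m + c0 - a.
have E x : ((c2 * x ^+ 2 + c1 * x + c0) * g x)%:E =
    (a%:E * ((x - m + 1) ^+ 2 * g x)%:E + b%:E * ((x - m) ^+ 2 * g x)%:E
     + c%:E * (g x)%:E)%E.
  by rewrite -!EFinM -!EFinD /c /b /a; congr EFin; field.
under eq_integral do rewrite E.
rewrite integralD//; last 2 first.
- by apply: integrableD => //; exact: integrableZl.
- exact: integrableZl.
rewrite integralD//; try exact: integrableZl.
rewrite !integralZl// M1 M2 integral_gauss_pdf//.
by rewrite -!EFinM -!EFinD /c /b /a; congr EFin; field.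
Qed.

End gauss_quadratic_moment.

Section gauss_KL.
Variable R : realType.
Implicit Types m v : R.

Lemma ln_gauss_pdf m v a : 0 < v ->
  ln (gauss_pdf m v a) = - (a - m) ^+ 2 / (2 * v) - ln (2 * pi * v) / 2.
Proof.
move=> v0; have piv0 : 0 < 2 * pi * v by rewrite !mulr_gt0// pi_gt0.
by rewrite ln_div ?posrE ?expR_gt0 ?sqrtr_gt0// expRK ln_sqrtr.
Qed.

Lemma KL_gauss_pdf m1 v1 m2 v2 : 0 < v1 -> 0 < v2 ->
  KL (gauss_pdf m1 v1) (gauss_pdf m2 v2) =
  ((ln v2 - ln v1 + (v1 + (m1 - m2) ^+ 2) / v2 - 1) / 2)%:E.
Proof.
move=> p1 p2; rewrite /KL.
set c2 := 1 / (2 * v2) - 1 / (2 * v1).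
set c1 := m1 / v1 - m2 / v2.
set c0 := m2 ^+ 2 / (2 * v2) - m1 ^+ 2 / (2 * v1) + (ln v2 - ln v1) / 2.
have E a : gauss_pdf m1 v1 a * ln (gauss_pdf m1 v1 a / gauss_pdf m2 v2 a) =
           (c2 * a ^+ 2 + c1 * a + c0) * gauss_pdf m1 v1 a.
  rewrite ln_div ?posrE ?gauss_pdf_gt0// !ln_gauss_pdf// !lnM ?posrE ?mulr_gt0 ?pi_gt0//.
  by rewrite /c2 /c1 /c0; field; rewrite !gt_eqF.
under eq_integral do rewrite E.
rewrite integral_quadratic_gauss_pdf//; congr EFin; rewrite /c2 /c1 /c0.
by field; rewrite !gt_eqF.
Qed.

End gauss_KL.

Section forward_noising.
Variables (R : realType) (r A B : R).
Hypotheses (hr : r ^+ 2 < 1) (hA : 0 < A) (hA1 : A ^+ 2 < 1)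
  (hB : 0 < B) (hB1 : B ^+ 2 < 1).
Notation mu := (@lebesgue_measure R).
Notation gp := (@gauss_pdf R).
Local Notation abar := (A ^+ 2).
Local Notation beta := (1 - B ^+ 2).

(* Given X_M^(0) = m, X_S^(t) has
   variance s0 and X_S^(t+1) has variance V; given moreover X_S^(t+1) = b,
   X_S^(t) has mean B b + k (m - A B r b) and variance v1. *)
Let s0 := 1 - A ^+ 2 * r ^+ 2.
Let V := 1 - A ^+ 2 * B ^+ 2 * r ^+ 2.
Let v1 := s0 * beta / V.
Let k := beta * A * r / V.

Let beta_gt0 : 0 < beta. Proof. by rewrite subr_gt0. Qed.
Let s0_gt0 : 0 < s0.
Proof.
by rewrite subr_gt0 (le_lt_trans _ hA1)// ger_pMr ?exprn_gt0// ltW.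
Qed.
Let V_gt0 : 0 < V.
Proof.
rewrite subr_gt0 (le_lt_trans _ hA1)// -mulrA ger_pMr ?exprn_gt0//.
by rewrite -[leRHS](mul1r 1) ler_pM ?sqr_ge0// ltW.
Qed.
Let v1_gt0 : 0 < v1. Proof. by rewrite divr_gt0// mulr_gt0. Qed.

Let sqrt_abar : Num.sqrt abar = A.
Proof. by rewrite sqrtr_sqr gtr0_norm. Qed.
Let sqrt_1Nbeta : Num.sqrt (1 - beta) = B.
Proof. by rewrite opprB addrCA subrr addr0 sqrtr_sqr gtr0_norm. Qed.

Lemma q_amb_gauss a m b : q_amb r abar beta a m b =
  gp 0 1 m * gp (A * r * m) s0 a * gp (B * a) beta b.
Proof.
rewrite /q_amb /joint_pdf sqrt_abar sqrt_1Nbeta.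
have -> : (fun s => binorm_pdf r m s * gp (A * s) (1 - abar) a * gp (B * a) beta b) =
    (fun s => (gp 0 1 m * gp (B * a) beta b) *
              (gp (r * m) (1 - r ^+ 2) s * gp (A * s) (1 - abar) a)).
  by apply/funext => s; rewrite binorm_pdfE//; ring.
rewrite Rint_gauss_pdf_mul ?subr_gt0// [A * (r * m)]mulrA.
have -> : abar * (1 - r ^+ 2) + (1 - abar) = s0 by rewrite /s0; ring.
by rewrite mulrAC.
Qed.

Lemma q_mb_gauss m b : q_mb r abar beta m b = gp 0 1 m * gp (A * B * r * m) V b.
Proof.
rewrite /q_mb; under eq_fun do rewrite q_amb_gauss -mulrA.
rewrite Rint_gauss_pdf_mul// (_ : B * (A * r * m) = A * B * r * m); last ring.
by rewrite (_ : B ^+ 2 * s0 + beta = V)// /s0 /V; ring.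
Qed.

Lemma q_ab_gauss a b : q_ab r abar beta a b = gp 0 1 a * gp (B * a) beta b.
Proof.
rewrite /q_ab.
have -> : (fun m => q_amb r abar beta a m b) =
    (fun m => gp (B * a) beta b * (gp 0 1 m * gp (A * r * m) s0 a)).
  by apply/funext => m; rewrite q_amb_gauss; ring.
rewrite Rint_gauss_pdf_mul// mulr0 (_ : (A * r) ^+ 2 * 1 + s0 = 1); last first.
  by rewrite /s0; ring.
exact: mulrC.
Qed.

Lemma q_b_gauss b : q_b r abar beta b = gp 0 1 b.
Proof.
rewrite /q_b.
have -> : (fun a => q_ab r abar beta a b) =
    (fun a => 1 * (gp 0 1 a * gp (B * a) beta b)).
  by apply/funext => a; rewrite q_ab_gauss mul1r.
rewrite Rint_gauss_pdf_mul// mulr0 mul1r (_ : B ^+ 2 * 1 + beta = 1)//; ring.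
Qed.

Lemma cond_a_bm_gauss m b :
  cond_a_bm r abar beta m b = gp (B * b + k * (m - A * B * r * b)) v1.
Proof.
apply/funext => a; rewrite /cond_a_bm q_amb_gauss q_mb_gauss -[_ * _ * gp _ _ b]mulrA.
rewrite gauss_pdf_mul// (_ : B ^+ 2 * s0 + beta = V); last by rewrite /s0 /V; ring.
rewrite (_ : B * (A * r * m) = A * B * r * m); last ring.
rewrite (_ : (A * r * m * beta + B * s0 * b) / V =
             B * b + k * (m - A * B * r * b)); last first.
  have V0 : 1 - (A * B * r) ^+ 2 != 0 by rewrite !exprMn gt_eqF.
  by rewrite /k /V /s0; field.
by rewrite mulrA mulrAC divff ?mul1r// mulf_neq0// gt_eqF// gauss_pdf_gt0.
Qed.

Lemma cond_a_b_gauss b : cond_a_b r abar beta b = gp (B * b) beta.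
Proof.
apply/funext => a; rewrite /cond_a_b q_ab_gauss q_b_gauss gauss_pdf_mul//.
rewrite mulr0 (_ : B ^+ 2 * 1 + beta = 1); last ring.
rewrite !divr1 mul1r mul0r add0r mulr1 mulrC mulKf// gt_eqF// gauss_pdf_gt0//.
Qed.

(* The KL divergence of the two conditionals at (m, b) is
   L0 + kappa (m - A B r b)^2. *)
Let kappa := k ^+ 2 / (2 * beta).
Let L0 := (ln beta - ln v1 + v1 / beta - 1) / 2.

Lemma q_mb_KL m b :
  ((q_mb r abar beta m b)%:E *
    KL (cond_a_bm r abar beta m b) (cond_a_b r abar beta b))%E =
  ((gp 0 1 m * kappa * (A * B * r) ^+ 2 * b ^+ 2
    + (- 2 * gp 0 1 m * kappa * (A * B * r) * m) * b
    + gp 0 1 m * (kappa * m ^+ 2 + L0)) * gp (A * B * r * m) V b)%:E.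
Proof.
rewrite q_mb_gauss cond_a_bm_gauss cond_a_b_gauss KL_gauss_pdf// -EFinM.
by congr EFin; rewrite /kappa /L0; field; rewrite gt_eqF.
Qed.

Lemma integral_q_mb_KL m :
  (\int[mu]_b ((q_mb r abar beta m b)%:E *
    KL (cond_a_bm r abar beta m b) (cond_a_b r abar beta b)))%E =
  ((kappa * V ^+ 2 * m ^+ 2 + 0 * m + (kappa * (A * B * r) ^+ 2 * V + L0))
   * gp 0 1 m)%:E.
Proof.
under eq_integral do rewrite q_mb_KL.
by rewrite integral_quadratic_gauss_pdf//; congr EFin; rewrite /V; ring.
Qed.

Lemma expected_KL_gauss : expected_KL r abar beta = (ln (V / s0) / 2)%:E.
Proof.
rewrite /expected_KL; under eq_integral do rewrite integral_q_mb_KL.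
rewrite integral_quadratic_gauss_pdf//; congr EFin.
rewrite /L0 /v1 !ln_div ?lnM ?posrE ?mulr_gt0//.
have V0 : 1 - A ^+ 2 * B ^+ 2 * r ^+ 2 != 0 := lt0r_neq0 V_gt0.
by rewrite /kappa /k /V /s0; field; rewrite !exprMn V0 gt_eqF.
Qed.

End forward_noising.

Lemma expected_KLE (R : realType) (rho abar beta : R) :
  0 < beta -> beta < 1 -> 0 < abar -> abar < 1 -> rho ^+ 2 < 1 ->
  expected_KL rho abar beta =
  (ln ((1 - abar * (1 - beta) * rho ^+ 2) / (1 - abar * rho ^+ 2)) / 2)%:E.
Proof.
move=> beta0 beta1 abar0 abar1 hrho.
have [A A0 eA] : exists2 A : R, 0 < A & abar = A ^+ 2.
  by exists (Num.sqrt abar); rewrite ?sqrtr_gt0 ?sqr_sqrtr// ltW.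
have [B B0 eB] : exists2 B : R, 0 < B & beta = 1 - B ^+ 2.
  exists (Num.sqrt (1 - beta)); first by rewrite sqrtr_gt0 subr_gt0.
  by rewrite sqr_sqrtr ?subr_ge0 ?ltW//; ring.
subst abar beta; have B1 : B ^+ 2 < 1 by rewrite -subr_gt0.
by rewrite expected_KL_gauss//; congr ((ln (_ / _) / 2)%:E); ring.
Qed.

Lemma oppr_ln1B_le (R : realType) (c x : R) : 0 <= x <= c -> c < 1 ->
  - ln (1 - x) <= ln ((1 - c + x) / (1 - c)).
Proof.
move=> /andP[x0 xc] c1; have x1 : 0 < 1 - x by lra.
have c0 : 0 < 1 - c by lra.
rewrite -lnV ?posrE// ler_ln ?posrE ?invr_gt0 ?divr_gt0//; last lra.
by rewrite -div1r ler_pdivrMr// mulrAC ler_pdivlMr//; nra.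
Qed.

Theorem corollary1 (R : realType) (rho abar beta : R)
  (hbeta0 : 0 < beta) (hbeta1 : beta < 1)
  (habar0 : 0 < abar) (habar1 : abar < 1)
  (hrho : rho ^+ 2 < 1) :
  ((- (ln (1 - beta * abar * rho ^+ 2) + beta * abar * rho ^+ 2) / 2)%:E
     <= expected_KL rho abar beta)%E.
Proof.
rewrite expected_KLE// lee_fin.
have c0 : 0 <= abar * rho ^+ 2 by rewrite mulr_ge0 ?sqr_ge0 ?ltW.
have c1 : abar * rho ^+ 2 < 1 by rewrite (le_lt_trans _ habar1)// ger_pMr// ltW.
have x0 : 0 <= beta * abar * rho ^+ 2 by rewrite -mulrA mulr_ge0// ltW.
have xc : beta * abar * rho ^+ 2 <= abar * rho ^+ 2 by rewrite -mulrA ler_piMl// ltW.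
have := oppr_ln1B_le (introT andP (conj x0 xc)) c1.
rewrite (_ : 1 - abar * rho ^+ 2 + _ = 1 - abar * (1 - beta) * rho ^+ 2); last ring.
lra.
Qed.
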